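(* Let $\Gamma=\{b_1q_1\overline{b_1'}=0,\dots,b_mq_m\overline{b_m'}=0\}\cup\{c_1\le c_1',\dots,c_n\le c_n'\}$ be a set of assumptions, with $q_i\in\Sigma$ and all $b_i,b_i',c_j,c_j'$ Boolean expressions. Let $u=(p_1+\cdots+p_k)^*$ where $\Sigma=\{p_1,\dots,p_k\}$, and $r=b_1q_1\overline{b_1'}+\cdots+b_mq_m\overline{b_m'}+c_1\overline{c_1'}+\cdots+c_n\overline{c_n'}$. Then for every KAT expression $e$, $\mathsf{GS}^\Gamma(e)=\mathsf{GS}(e)\setminus\mathsf{GS}(uru)$.
   Context: Let $\Sigma=\{p_1,\dots,p_k\}$ ($k\ge1$) be a finite set of action symbols and $T=\{t_1,\dots,t_l\}$ ($l\ge1$) a finite set of test symbols. Boolean expressions: $b::=0\mid 1\mid t\mid \overline{b}\mid b_1+b_2\mid b_1 b_2$; KAT expressions (syntactic terms): $e::=p\in\Sigma\mid b\mid e_1+e_2\mid e_1e_2\mid e^*$. $\mathsf{At}$ is the set of atoms (words $b_1\cdots b_l$ with $b_i\in\{t_i,\overline{t_i}\}$), identified with truth assignments to $T$; $\alpha\le b$ means $b$ is true under $\alpha$. Guarded strings: $\mathsf{GS}=(\mathsf{At}\cdot\Sigma)^*\cdot\mathsf{At}$. The fusion product $xy$ is defined only when the last atom of $x$ equals the first atom of $y$, and is the concatenation with one copy of that atom omitted; $X\diamond Y=\{xy\mid x\in X,y\in Y,xy\text{ defined}\}$, $X^0=\mathsf{At}$ in the definition of $\mathsf{GS}$, $X^{n+1}=X\diamond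 X^n$. $\mathsf{GS}(p)=\{\alpha p\beta\mid\alpha,\beta\in\mathsf{At}\}$; $\mathsf{GS}(b)=\{\alpha\in\mathsf{At}\mid\alpha\le b\}$; $\mathsf{GS}(e_1+e_2)=\mathsf{GS}(e_1)\cup\mathsf{GS}(e_2)$; $\mathsf{GS}(e_1e_2)=\mathsf{GS}(e_1)\diamond\mathsf{GS}(e_2)$; $\mathsf{GS}(e^* )=\bigcup_{n\ge0}\mathsf{GS}(e)^n$. Given $\Gamma$ as in the claim, $\mathsf{At}^\Gamma=\{\alpha\in\mathsf{At}\mid \alpha\le c\Rightarrow\alpha\le c'\text{ for all }(c\le c')\in\Gamma\}$. Guarded strings modulo $\Gamma$: $\mathsf{GS}^\Gamma(p)=\{\alpha p\beta\mid\alpha,\beta\in\mathsf{At}^\Gamma\text{ and for every assumption }bp\overline{b'}=0\text{ in }\Gamma\text{ (with this same }p),\ \alpha\le b\Rightarrow\beta\le b'\}$; $\mathsf{GS}^\Gamma(b)=\{\alpha\in\mathsf{At}^\Gamma\mid\alpha\le b\}$; $\mathsf{GS}^\Gamma(e_1+e_2)=\mathsf{GS}^\Gamma(e_1)\cup\mathsf{GS}^\Gamma(e_2)$; $\mathsf{GS}^\Gamma(e_1e_2)=\mathsf{GS}^\Gamma(e_1)\diamond\mathsf{GS}^\Gamma(e_2)$; $\mathsf{GS}^\Gamma(e^* )=\bigcup_{n\ge0}\mathsf{GS}^\Gamma(e)^n$, where here $X^0$ is taken to be $\mathsf{At}^\Gamma$. *)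

From mathcomp Require Import all_boot.
Set Implicit Arguments. Unset Strict Implicit. Unset Printing Implicit Defensive.
From Stdlib Require Lists.List.

Inductive bexp (l : nat) : Type :=
| B0 | B1 | Bt of 'I_l | Bneg of bexp l | Bplus of bexp l & bexp l
| Bmul of bexp l & bexp l.

Inductive kexp (k l : nat) : Type :=
| Kact of 'I_k | Ktest of bexp l | Kplus of kexp k l & kexp k l
| Kmul of kexp k l & kexp k l | Kstar of kexp k l.

Definition atom (l : nat) := {ffun 'I_l -> bool}.

Fixpoint beval l (a : atom l) (b : bexp l) : bool :=
  match b with
  | B0 => false | B1 => true | Bt t => a t
  | Bneg b => ~~ beval a b
  | Bplus b1 b2 => beval a b1 || beval a b2
  | Bmul b1 b2 => beval a b1 && beval a b2
  end.

(* Guarded string alpha0 p1 alpha1 ... pn alphan  ~  (alpha0, [(p1,alpha1);...;(pn,alphan)]) *)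
Definition gstring (k l : nat) := (atom l * seq ('I_k * atom l))%type.
Definition gs_first k l (x : gstring k l) : atom l := x.1.
Definition gs_last k l (x : gstring k l) : atom l := last x.1 (map snd x.2).
Definition gs_fuse k l (x y : gstring k l) : gstring k l := (x.1, x.2 ++ y.2).

Definition lang k l := gstring k l -> Prop.

Definition diamond k l (X Y : lang k l) : lang k l :=
  fun w => exists x y, X x /\ Y y /\ gs_last x = gs_first y /\ w = gs_fuse x y.

(* X^0 = Z (the set of atoms, possibly restricted), X^(n+1) = X <> X^n *)
Fixpoint lpow k l (Z X : lang k l) (n : nat) : lang k l :=
  match n with
  | 0 => Z
  | n.+1 => diamond X (lpow Z X n)
  end.

Definition atoms_in k l (P : atom l -> Prop) : lang k l :=
  fun w => w.2 = [::] /\ P w.1.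

Fixpoint GS k l (e : kexp k l) : lang k l :=
  match e with
  | Kact p => fun w => exists a b, w = (a, [:: (p, b)])
  | Ktest b => atoms_in (fun a => beval a b)
  | Kplus e1 e2 => fun w => GS e1 w \/ GS e2 w
  | Kmul e1 e2 => diamond (GS e1) (GS e2)
  | Kstar e1 => fun w => exists n, lpow (atoms_in (fun _ => True)) (GS e1) n w
  end.

(* Assumptions Gamma: action assumptions b q ~b' = 0 given as triples (b,q,b'),
   test assumptions c <= c' given as pairs (c,c'). *)
Definition AtG l (G2 : seq (bexp l * bexp l)) (a : atom l) : Prop :=
  forall cc, Stdlib.Lists.List.In cc G2 -> beval a cc.1 -> beval a cc.2.

Fixpoint GSG k l (G1 : seq (bexp l * 'I_k * bexp l)) (G2 : seq (bexp l * bexp l))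
    (e : kexp k l) : lang k l :=
  match e with
  | Kact p => fun w => exists a b, w = (a, [:: (p, b)]) /\ AtG G2 a /\ AtG G2 b /\
      (forall t, Stdlib.Lists.List.In t G1 -> t.1.2 = p -> beval a t.1.1 -> beval b t.2)
  | Ktest b => atoms_in (fun a => AtG G2 a /\ beval a b)
  | Kplus e1 e2 => fun w => GSG G1 G2 e1 w \/ GSG G1 G2 e2 w
  | Kmul e1 e2 => diamond (GSG G1 G2 e1) (GSG G1 G2 e2)
  | Kstar e1 => fun w => exists n, lpow (atoms_in (AtG G2)) (GSG G1 G2 e1) n w
  end.

Fixpoint ksum k l (s : seq (kexp k l)) : kexp k l :=
  match s with
  | [::] => Ktest k (B0 l)
  | [:: e] => e
  | e :: s' => Kplus e (ksum s')
  end.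

Definition u_expr k l : kexp k l := Kstar (ksum [seq Kact l p | p <- enum 'I_k]).

Definition r_expr k l (G1 : seq (bexp l * 'I_k * bexp l)) (G2 : seq (bexp l * bexp l))
  : kexp k l :=
  ksum ([seq Kmul (Kmul (Ktest k t.1.1) (Kact l t.1.2)) (Ktest k (Bneg t.2)) | t <- G1]
     ++ [seq Ktest k (Bmul cc.1 (Bneg cc.2)) | cc <- G2]).

From mathcomp Require Import all_boot.
From Stdlib Require Import Classical.
Set Implicit Arguments. Unset Strict Implicit.

(* Call a guarded string a0 p1 a1 ... pn an _admissible_ when
   every atom ai lies in At^Gamma and every step a(i-1) pi ai respects the
   action assumptions b q ~b' = 0 of Gamma.  The theorem splits in two facts:
   1. GS^Gamma(e) = GS(e) restricted to admissible strings, by induction on e: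
      admissibility of a fusion xy is exactly admissibility of x and of y,
      so restriction commutes with union, fusion product and powers.
   2. A guarded string is admissible iff it is not in GS(uru): since GS(u)
      contains every guarded string, GS(uru) consists of the strings having a
      factor in GS(r), and the factors in GS(r) are exactly the single atoms
      outside At^Gamma and the single steps violating an action assumption. *)

Section Admissible.
Variables (k l : nat) (G1 : seq (bexp l * 'I_k * bexp l)) (G2 : seq (bexp l * bexp l)).

Definition step_ok (a : atom l) (p : 'I_k) (b : atom l) : Prop :=
  forall t, List.In t G1 -> t.1.2 = p -> beval a t.1.1 -> beval b t.2.

Fixpoint steps_ok (a : atom l) (s : seq ('I_k * atom l)) : Prop :=
  match s with
  | [::] => True
  | (p, b) :: s' => AtG G2 b /\ step_ok a p b /\ steps_ok b s'
  end.

Definition admissible (w : gstring k l) : Prop := AtG G2 w.1 /\ steps_ok w.1 w.2.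

Lemma steps_ok_cat (a : atom l) (s1 s2 : seq ('I_k * atom l)) :
  steps_ok a (s1 ++ s2) <-> steps_ok a s1 /\ steps_ok (last a (map snd s1)) s2.
Proof.
elim: s1 a => [|[p b] s1 IH] a /=; first tauto.
rewrite IH; tauto.
Qed.

Lemma admissible_last (w : gstring k l) : admissible w -> AtG G2 (gs_last w).
Proof.
case: w => a s; rewrite /admissible /gs_last /=.
elim: s a => [|[p b] s IH] a /=; first tauto.
by move=> [_ [Hb [_ Hs]]]; apply: IH.
Qed.

Lemma admissible_fuse (x y : gstring k l) : gs_last x = gs_first y ->
  admissible (gs_fuse x y) <-> admissible x /\ admissible y.
Proof.
case: x => a s; case: y => c t; rewrite /admissible /gs_fuse /gs_last /gs_first /=.
move=> Hxy; rewrite steps_ok_cat Hxy.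
have := @admissible_last (a, s); rewrite /admissible /gs_last /= Hxy; tauto.
Qed.

Lemma diamond_admissible (X X' Y Y' : lang k l) :
  (forall w, X w <-> X' w /\ admissible w) ->
  (forall w, Y w <-> Y' w /\ admissible w) ->
  forall w, diamond X Y w <-> diamond X' Y' w /\ admissible w.
Proof.
move=> HX HY w; split.
- move=> [x [y [Hx [Hy [Hxy ->]]]]]; rewrite HX in Hx; rewrite HY in Hy.
  split; first by exists x, y; tauto.
  by apply/admissible_fuse; tauto.
- move=> [[x [y [Hx [Hy [Hxy ->]]]]] /(admissible_fuse Hxy) [Hadx Hady]].
  by exists x, y; rewrite HX HY; tauto.
Qed.

Lemma atoms_admissible (P : atom l -> Prop) (w : gstring k l) :
  atoms_in (fun a => AtG G2 a /\ P a) w <-> atoms_in P w /\ admissible w.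
Proof.
case: w => a s; rewrite /atoms_in /admissible /=; split.
- by move=> [-> [Ha Hp]].
- by move=> [[-> Hp] [Ha _]].
Qed.

Lemma GSG_admissible (e : kexp k l) (w : gstring k l) :
  GSG G1 G2 e w <-> GS e w /\ admissible w.
Proof.
elim: e w => [p|b|e1 IH1 e2 IH2|e1 IH1 e2 IH2|e1 IH1] w /=.
- split.
  + by move=> [a [b [-> [Ha [Hb Hab]]]]]; split; [exists a, b|].
  + by move=> [[a [b ->]] [Ha [Hb [Hab _]]]]; exists a, b.
- exact: atoms_admissible.
- by rewrite IH1 IH2; tauto.
- exact: diamond_admissible.
- have Hpow n w' : lpow (atoms_in (AtG G2)) (GSG G1 G2 e1) n w' <->
      lpow (atoms_in (fun=> True)) (GS e1) n w' /\ admissible w'.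
    elim: n w' => [|n IHn] w' /=; last exact: diamond_admissible.
    have := @atoms_admissible (fun=> True) w'.
    by rewrite /atoms_in; case: w' => a s /=; tauto.
  split.
  + by move=> [n /Hpow [Hn Hw]]; split; first exists n.
  + by move=> [[n Hn] Hw]; exists n; apply/Hpow.
Qed.

Lemma not_AtG (a : atom l) : ~ AtG G2 a ->
  exists cc, List.In cc G2 /\ beval a cc.1 /\ ~ beval a cc.2.
Proof.
move=> Ha; apply: NNPP => Hnone; apply: Ha => cc Hin H1.
by apply: NNPP => H2; apply: Hnone; exists cc.
Qed.

Lemma not_step_ok (a : atom l) (p : 'I_k) (b : atom l) : ~ step_ok a p b ->
  exists t, List.In t G1 /\ t.1.2 = p /\ beval a t.1.1 /\ ~ beval b t.2.
Proof.
move=> Hab; apply: NNPP => Hnone; apply: Hab => t Hin Hp H1.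
by apply: NNPP => H2; apply: Hnone; exists t.
Qed.

End Admissible.

Section Sums.
Variables k l : nat.

Lemma GS_ksum (s : seq (kexp k l)) (w : gstring k l) :
  GS (ksum s) w <-> exists e, List.In e s /\ GS e w.
Proof.
elim: s => [|e1 [|e2 s] IH].
- by split; [case | move=> [e [[] _]]].
- by split; [exists e1; split; [left|] | move=> [e [[<-|[]] He]]].
- change (GS e1 w \/ GS (ksum (e2 :: s)) w <->
          exists e, List.In e [:: e1, e2 & s] /\ GS e w).
  rewrite IH; split.
  + by move=> [He1|[e [Hin He]]]; [exists e1; split; [left|] | exists e; split; [right|]].
  + by move=> [e [[<-|Hin] He]]; [left | right; exists e].
Qed.

Lemma In_mem (T : eqType) (x : T) (s : seq T) : x \in s -> List.In x s.
Proof.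
elim: s => [|y s IH] //; rewrite in_cons => /orP [/eqP ->|Hx].
- by left.
- by right; apply: IH.
Qed.

Lemma GS_u (w : gstring k l) : GS (u_expr k l) w.
Proof.
case: w => a s; exists (size s); elim: s a => [|[p b] s IH] a //=.
exists (a, [:: (p, b)]), (b, s); split; last by [].
apply/GS_ksum; exists (Kact l p); split; last by exists a, b.
by apply: List.in_map; apply: In_mem; rewrite mem_enum.
Qed.

End Sums.

Section Violations.
Variables (k l : nat) (G1 : seq (bexp l * 'I_k * bexp l)) (G2 : seq (bexp l * bexp l)).

Notation uru := (Kmul (Kmul (u_expr k l) (r_expr G1 G2)) (u_expr k l)).

Lemma GS_r_not_admissible (y : gstring k l) :
  GS (r_expr G1 G2) y -> ~ admissible G1 G2 y.
Proof.
rewrite /r_expr GS_ksum => -[e [He Hy]].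
case: (List.in_app_or _ _ _ He) => {He} /List.in_map_iff [t [Et Ht]]; subst e.
- move: Hy => /= [y1 [y3 [[y0 [y2 [[Hy0 Hb] [[a [b E2]] [Hl E1]]]]] [[Hy3 Hb'] [Hl' E]]]]].
  case: y0 Hy0 Hb Hl E1 => a0 s0 /= Hs0 Hb; rewrite /gs_last /gs_first E2 /= => Ha E1; subst.
  case: y3 Hy3 Hb' Hl' => a3 s3 /= -> Hb'; rewrite /gs_last /gs_first /= => Hb3; subst a3.
  rewrite /admissible /gs_fuse /= => -[_ [_ [Hstep _]]].
  by move: (Hstep t Ht erefl Hb) Hb' => ->.
- move: Hy => /= [_ /andP [H1 /negP H2]] [Ha _].
  exact: H2 (Ha t Ht H1).
Qed.

Lemma GS_r_atom (a : atom l) cc :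
  List.In cc G2 -> beval a cc.1 -> ~ beval a cc.2 -> GS (r_expr G1 G2) (a, [::]).
Proof.
move=> Hin H1 H2; rewrite /r_expr GS_ksum.
exists (Ktest k (Bmul cc.1 (Bneg cc.2))); split.
- by apply: List.in_or_app; right; apply: List.in_map.
- by split => //=; rewrite H1 /=; apply/negP.
Qed.

Lemma GS_r_step (a b : atom l) t :
  List.In t G1 -> beval a t.1.1 -> ~ beval b t.2 ->
  GS (r_expr G1 G2) (a, [:: (t.1.2, b)]).
Proof.
move=> Hin H1 H2; rewrite /r_expr GS_ksum.
exists (Kmul (Kmul (Ktest k t.1.1) (Kact l t.1.2)) (Ktest k (Bneg t.2))); split.
- apply: List.in_or_app; left.
  exact: (List.in_map (fun t => Kmul (Kmul (Ktest k t.1.1) (Kact l t.1.2))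
                                     (Ktest k (Bneg t.2)))).
- exists (a, [:: (t.1.2, b)]), (b, [::]); do !split => //=; last exact/negP.
  by exists (a, [::]), (a, [:: (t.1.2, b)]); do !split => //; exists a, b.
Qed.

Lemma GS_uru_prefix (x y : gstring k l) :
  GS (r_expr G1 G2) x -> gs_last x = gs_first y -> GS uru (gs_fuse x y).
Proof.
move=> Hx Hxy; exists x, y; do !split => //; last exact: GS_u.
exists (x.1, [::]), x; do !split => //; first exact: GS_u.
by case: x {Hx Hxy}.
Qed.

Lemma GS_uru_cons (a : atom l) (p : 'I_k) (b : atom l) s :
  GS uru (b, s) -> GS uru (a, (p, b) :: s).
Proof.
move=> [xy [z [[[x1 x2] [y [_ [Hy [Hxy ->]]]]] [Hz [Hyz E]]]]].
case: E => Ex1 Es; subst x1 s.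
exists (gs_fuse (a, (p, b) :: x2) y), z; do !split => //.
by exists (a, (p, b) :: x2), y; do !split => //; apply: GS_u.
Qed.

Lemma not_admissible_GS_uru (w : gstring k l) : ~ admissible G1 G2 w -> GS uru w.
Proof.
case: w => a s; elim: s a => [|[p b] s IH] a; rewrite /admissible /= => Hw.
- have /not_AtG [cc [Hin [H1 H2]]] : ~ AtG G2 a by tauto.
  exact: (GS_uru_prefix (GS_r_atom Hin H1 H2) (y := (a, [::]))).
- have [Ha | /not_AtG [cc [Hin [H1 H2]]]] := classic (AtG G2 a); last first.
    exact: (GS_uru_prefix (GS_r_atom Hin H1 H2) (y := (a, (p, b) :: s))).
  have [Hab | /not_step_ok [t [Hin [<- [H1 H2]]]]] := classic (step_ok G1 a p b).
  + by apply/GS_uru_cons/IH; rewrite /admissible /=; tauto.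
  + exact: (GS_uru_prefix (GS_r_step Hin H1 H2) (y := (b, s))).
Qed.

Lemma admissible_iff_not_uru (w : gstring k l) : admissible G1 G2 w <-> ~ GS uru w.
Proof.
split.
- move=> Hw [xy [z [[x [y [_ [Hy [Hxy ->]]]]] [_ [Hyz Ew]]]]]; subst w.
  move: Hw => /(admissible_fuse _ _ Hyz) [/(admissible_fuse _ _ Hxy) [_ Hady] _].
  exact: GS_r_not_admissible Hy Hady.
- by move=> Hn; apply: NNPP => Hw; apply/Hn/not_admissible_GS_uru.
Qed.

End Violations.

Theorem mainTheorem9 (k l : nat) (hk : 0 < k) (hl : 0 < l)
    (G1 : seq (bexp l * 'I_k * bexp l)) (G2 : seq (bexp l * bexp l))
    (e : kexp k l) (w : gstring k l) :
  GSG G1 G2 e w <->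
  (GS e w /\ ~ GS (Kmul (Kmul (u_expr k l) (r_expr G1 G2)) (u_expr k l)) w).
Proof. by rewrite GSG_admissible admissible_iff_not_uru. Qed.
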